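(* Let a stabilizer code $H$ be phantom with respect to the logical basis $(Q_X,Q_Z)$. Then for every weight vector $\mathbf w\in\mathbb Z_{\ge0}^3$, the number $\#\{v\in cQ_X+\mathrm{rs}(H):\ \mathbf w(v)=\mathbf w\}$ is the same for all $c\in\mathbb F_2^k\setminus\{0\}$. The same holds with $Q_X$ replaced by $Q_Z$.
   Context: Conventions: arithmetic over $\mathbb F_2$; vectors are row vectors; $\mathrm{rs}(M)$ is the row space of $M$; $E_{ab}\in\mathbb F_2^{k\times k}$ is the matrix unit with a single $1$ in position $(a,b)$; $A^{-T}=(A^{-1})^T$; $\Omega=\begin{pmatrix}0&I_n\\ I_n&0\end{pmatrix}$. A stabilizer code on $n$ qubits is given by a full-row-rank $H\in\mathbb F_2^{r\times 2n}$ with $H\Omega H^T=0$; $k=n-r$. A vector $(x|z)\in\mathbb F_2^{2n}$ represents the Pauli operator $\prod_iX_i^{x_i}Z_i^{z_i}$ up to phase. A logical basis is a pair $Q_X,Q_Z\in\mathbb F_2^{k\times 2n}$ with $H\Omega Q_X^T=0$, $H\Omega Q_Z^T=0$, $Q_X\Omega Q_X^T=0$, $Q_Z\Omega Q_Z^T=0$, $Q_X\Omega Q_Z^T=I_k$. A qubit permutation $\pi\in S_n$ with permutation matrix $P$ acts by $(x|z)\mapsto(xP|zP)$, i.e. right multiplication by $P\oplus P=\mathrm{diag}(P,P)$. For $A\in GL(k,\mathbb F_2)$, $\pi$ implements the logical CNOT circuit $A$ in the basis $(Q_X,Q_Z)$ if $\mathrm{rs}(H(P\oplus P))=\mathrm{rs}(H)$,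 every row of $Q_X(P\oplus P)-AQ_X$ lies in $\mathrm{rs}(H)$, and every row of $Q_Z(P\oplus P)-A^{-T}Q_Z$ lies in $\mathrm{rs}(H)$. The logical $\mathrm{CNOT}_{ab}$ ($a\neq b$) corresponds to $A=I_k+E_{ab}$. The stabilizer code is phantom with respect to $(Q_X,Q_Z)$ if for every ordered pair $(a,b)\in[k]^2$ with $a\ne b$ some permutation implements $I_k+E_{ab}$ in that basis; it is phantom if it is phantom with respect to some logical basis. The weight vector of $v=(x|z)$ is $\mathbf w(v)=(w_X,w_Z,w_Y)$ with $w_X=\#\{i:x_i=1,z_i=0\}$, $w_Z=\#\{i:x_i=0,z_i=1\}$, $w_Y=\#\{i:x_i=z_i=1\}$. *)

From HB Require Import structures.
From mathcomp Require Import all_boot all_order all_algebra all_fingroup.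
Set Implicit Arguments. Unset Strict Implicit. Unset Printing Implicit Defensive.
Import GRing.Theory.
Local Open Scope ring_scope.

(* Binary field F_2. Vectors (x|z) in F_2^{2n} are row vectors 'rV_(n + n):
   x = lsubmx v, z = rsubmx v. *)
Notation F2 := 'F_2.

Definition Omega (n : nat) : 'M[F2]_(n + n) := block_mx 0 1%:M 1%:M 0.

Definition stab_code (n r : nat) (H : 'M[F2]_(r, n + n)) : Prop :=
  row_free H /\ H *m Omega n *m H^T = 0.

Definition logical_basis (n r k : nat) (H : 'M[F2]_(r, n + n))
  (QX QZ : 'M[F2]_(k, n + n)) : Prop :=
  [/\ H *m Omega n *m QX^T = 0, H *m Omega n *m QZ^T = 0,
      QX *m Omega n *m QX^T = 0, QZ *m Omega n *m QZ^T = 0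
    & QX *m Omega n *m QZ^T = 1%:M].

Definition perm2 (n : nat) (s : 'S_n) : 'M[F2]_(n + n) :=
  block_mx (perm_mx s) 0 0 (perm_mx s).

Definition implements (n r k : nat) (H : 'M[F2]_(r, n + n))
  (QX QZ : 'M[F2]_(k, n + n)) (s : 'S_n) (A : 'M[F2]_k) : Prop :=
  [/\ (H *m perm2 s == H)%MS,
      (QX *m perm2 s - A *m QX <= H)%MS
    & (QZ *m perm2 s - (invmx A)^T *m QZ <= H)%MS].

Definition cnot_mx (k : nat) (a b : 'I_k) : 'M[F2]_k := 1%:M + delta_mx a b.

Definition phantom_wrt (n r k : nat) (H : 'M[F2]_(r, n + n))
  (QX QZ : 'M[F2]_(k, n + n)) : Prop :=
  forall a b : 'I_k, a != b -> exists s : 'S_n, implements H QX QZ s (cnot_mx a b).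

(* weight vector (w_X, w_Z, w_Y) of v = (x|z) *)
Definition wvec (n : nat) (v : 'rV[F2]_(n + n)) : nat * nat * nat :=
  (#|[set i : 'I_n | (lsubmx v 0 i == 1) && (rsubmx v 0 i == 0)]|,
   #|[set i : 'I_n | (lsubmx v 0 i == 0) && (rsubmx v 0 i == 1)]|,
   #|[set i : 'I_n | (lsubmx v 0 i == 1) && (rsubmx v 0 i == 1)]|).

Definition coset_count (n r k : nat) (H : 'M[F2]_(r, n + n))
  (Q : 'M[F2]_(k, n + n)) (c : 'rV[F2]_k) (w : nat * nat * nat) : nat :=
  #|[set v : 'rV[F2]_(n + n) | ((v - c *m Q) <= H)%MS && (wvec v == w)]|.

From HB Require Import structures.
From mathcomp Require Import all_boot all_order all_algebra all_fingroup.
Import GRing.Theory.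
Local Open Scope ring_scope.

Set Implicit Arguments.
Unset Strict Implicit.

(* A permutation implementing CNOT_ab sends v to v (P (+) P), which preserves
   weight vectors and rs(H) and maps the coset c Q_X + rs(H) into
   (c CNOT_ab) Q_X + rs(H); as CNOT_ab is an involution the coset counts of c
   and c CNOT_ab agree.  Right multiplications by CNOTs act transitively on
   nonzero rows: clearing the other bits turns any c with c_a = 1 into e_a,
   and e_a -> e_a + e_b -> e_b.  For Q_Z the implementation of CNOT_ba acts
   by (CNOT_ba^-1)^T = CNOT_ab, so the same argument applies. *)

Lemma F2_addrr (x : F2) : x + x = 0.
Proof. exact: (addrr_pchar2 (pchar_Fp (isT : prime 2))). Qed.

Lemma F2_neq0 (x : F2) : (x != 0) = (x == 1).
Proof. by case: x => -[|[|//]] ?. Qed.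

Section Cnot.

Variables (k : nat) (a b : 'I_k).

Lemma row_cnot_mxE (c : 'rV[F2]_k) j :
  (c *m cnot_mx a b) 0 j = c 0 j + c 0 a * (j == b)%:R.
Proof.
rewrite /cnot_mx mulmxDr mulmx1 mxE; congr (_ + _).
rewrite mxE (bigD1 a) //= mxE eqxx /= big1 ?addr0 // => i /negbTE ne.
by rewrite mxE ne mulr0.
Qed.

Lemma trmx_cnot : (cnot_mx a b)^T = cnot_mx b a.
Proof. by rewrite /cnot_mx linearD /= trmx1 trmx_delta. Qed.

Hypothesis neq_ab : a != b.

Lemma cnot_mxK : cnot_mx a b *m cnot_mx a b = 1%:M.
Proof.
rewrite /cnot_mx mulmxDl !mulmxDr !mul1mx mulmx1 mul_delta_mx_0 1?eq_sym //.
rewrite addr0 -addrA; apply/matrixP => i j.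
by rewrite !mxE F2_addrr addr0.
Qed.

Lemma invmx_cnot : invmx (cnot_mx a b) = cnot_mx a b.
Proof.
have unit_cnot : cnot_mx a b \in unitmx by case/mulmx1_unit: cnot_mxK.
by rewrite -[LHS]mulmx1 -cnot_mxK mulmxA mulVmx // mul1mx.
Qed.

End Cnot.

Section PermAction.

Variables (n : nat) (s : 'S_n).

Lemma lsubmx_mul_perm2 (v : 'rV[F2]_(n + n)) :
  lsubmx (v *m perm2 s) = lsubmx v *m perm_mx s.
Proof.
by rewrite -{1}(hsubmxK v) /perm2 mul_row_block !mulmx0 addr0 row_mxKl.
Qed.

Lemma rsubmx_mul_perm2 (v : 'rV[F2]_(n + n)) :
  rsubmx (v *m perm2 s) = rsubmx v *m perm_mx s.
Proof.
by rewrite -{1}(hsubmxK v) /perm2 mul_row_block !mulmx0 add0r row_mxKr.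
Qed.

Lemma row_perm_mxE (x : 'rV[F2]_n) j : (x *m perm_mx s) 0 j = x 0 (s^-1%g j).
Proof. by rewrite -[s]invgK -col_permE mxE invgK. Qed.

Lemma wvec_mul_perm2 (v : 'rV[F2]_(n + n)) : wvec (v *m perm2 s) = wvec v.
Proof.
rewrite /wvec lsubmx_mul_perm2 rsubmx_mul_perm2.
have card_perm (P : F2 -> F2 -> bool) :
    #|[set i | P ((lsubmx v *m perm_mx s) 0 i) ((rsubmx v *m perm_mx s) 0 i)]| =
    #|[set i | P (lsubmx v 0 i) (rsubmx v 0 i)]|.
  rewrite -[RHS](card_preimset _ (@perm_inj _ (s^-1)%g)).
  by apply: eq_card => i; rewrite !inE !row_perm_mxE.
by rewrite (card_perm (fun x z => (x == 1) && (z == 0)))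
  (card_perm (fun x z => (x == 0) && (z == 1)))
  (card_perm (fun x z => (x == 1) && (z == 1))).
Qed.

Lemma perm2_mulV : perm2 s *m perm2 (s^-1)%g = 1%:M.
Proof.
rewrite /perm2 mulmx_block !mulmx0 !mul0mx !addr0 !add0r -perm_mxM mulgV.
by rewrite perm_mx1 -scalar_mx_block.
Qed.

Lemma mul_perm2_inj : injective (fun v : 'rV[F2]_(n + n) => v *m perm2 s).
Proof.
by move=> u v /= e; rewrite -[u]mulmx1 -[v]mulmx1 -perm2_mulV !mulmxA e.
Qed.

End PermAction.

Section CosetCount.

Variables (n r k : nat) (H : 'M[F2]_(r, n + n)) (Q : 'M[F2]_(k, n + n)).
Variables (s : 'S_n) (B : 'M[F2]_k).
Hypotheses (sHs : (H *m perm2 s <= H)%MS) (sQs : (Q *m perm2 s - B *m Q <= H)%MS).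

Lemma coset_count_mulmx_le c w :
  (coset_count H Q c w <= coset_count H Q (c *m B) w)%N.
Proof.
rewrite /coset_count -(card_imset _ (@mul_perm2_inj n s)).
apply: subset_leq_card; apply/subsetP => u /imsetP [v].
rewrite !inE => /andP [coset_v wv] ->; rewrite wvec_mul_perm2 wv andbT.
have -> : v *m perm2 s - c *m B *m Q =
          (v - c *m Q) *m perm2 s + c *m (Q *m perm2 s - B *m Q).
  by rewrite mulmxBl mulmxBr !mulmxA addrA subrK.
rewrite addmx_sub //; last exact: submx_trans (submxMl _ _) sQs.
exact: submx_trans (submxMr _ coset_v) sHs.
Qed.

Lemma coset_count_invol c w :
  B *m B = 1%:M -> coset_count H Q (c *m B) w = coset_count H Q c w.
Proof.
move=> BK; apply/eqP; rewrite eqn_leq coset_count_mulmx_le andbT.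
by rewrite -{2}(mulmx1 c) -BK mulmxA coset_count_mulmx_le.
Qed.

End CosetCount.

Definition row_supp k (c : 'rV[F2]_k) : {set 'I_k} := [set j | c 0 j != 0].

Lemma row_supp_delta k (c : 'rV[F2]_k) a :
  a \in row_supp c -> row_supp c :\ a = set0 -> c = delta_mx 0 a.
Proof.
rewrite inE F2_neq0 => /eqP ca /setP supp_a; apply/matrixP => i j.
rewrite (ord1 i) mxE eqxx /=; case: (eqVneq j a) => [-> // | ja].
by have := supp_a j; rewrite !inE ja /= => /negbFE/eqP.
Qed.

Lemma row_supp_cnot k (a b : 'I_k) (c : 'rV[F2]_k) :
  a != b -> c 0 a = 1 -> b \in row_supp c ->
  row_supp (c *m cnot_mx a b) = row_supp c :\ b.
Proof.
rewrite inE F2_neq0 => ab ca /eqP cb; apply/setP => j.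
rewrite !inE row_cnot_mxE ca mul1r; case: (eqVneq j b) => [-> | jb].
  by rewrite cb F2_addrr eqxx.
by rewrite addr0.
Qed.

Section CnotOrbit.

Variables (k : nat) (T : Type) (f : 'rV[F2]_k -> T).
Hypothesis f_cnot : forall a b c, a != b -> f (c *m cnot_mx a b) = f c.

Lemma cnot_orbit_delta (c : 'rV[F2]_k) a :
  a \in row_supp c -> f c = f (delta_mx 0 a).
Proof.
move: {2}#|_| (erefl #|row_supp c :\ a|) => m.
elim: m c => [|m IH] c hm ca.
  by rewrite (row_supp_delta ca (cards0_eq hm)).
have /card_gt0P [b supp_b] : (0 < #|row_supp c :\ a|)%N by rewrite hm.
move: (supp_b); rewrite in_setD1 eq_sym => /andP [ab cb].
have ca1 : c 0 a = 1 by move: ca; rewrite inE F2_neq0 => /eqP.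
rewrite -(f_cnot c ab); apply: IH.
  move: hm; rewrite row_supp_cnot // setDDl setUC -setDDl (cardsD1 b) supp_b.
  by case.
by rewrite inE row_cnot_mxE ca1 (negbTE ab) mulr0 addr0 oner_neq0.
Qed.

Lemma cnot_orbit_nonzero (c1 c2 : 'rV[F2]_k) : c1 != 0 -> c2 != 0 -> f c1 = f c2.
Proof.
have supp_nonzero (c : 'rV[F2]_k) : c != 0 -> exists a, a \in row_supp c.
  move=> /eqP nz; case: (set_0Vmem (row_supp c)) => [supp0 | [a ca]]; last by exists a.
  case: nz; apply/matrixP => i j; rewrite (ord1 i) mxE.
  by apply/eqP; have /setP/(_ j) := supp0; rewrite !inE => /negbFE.
move=> /supp_nonzero [a1 s1] /supp_nonzero [a2 s2].
rewrite (cnot_orbit_delta s1) (cnot_orbit_delta s2).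
have [-> // | ne] := eqVneq a1 a2.
pose d : 'rV[F2]_k := delta_mx 0 a1 + delta_mx 0 a2.
have d_a1 : a1 \in row_supp d by rewrite inE !mxE !eqxx (negbTE ne) addr0 oner_neq0.
have d_a2 : a2 \in row_supp d.
  by rewrite inE !mxE !eqxx [a2 == a1]eq_sym (negbTE ne) add0r oner_neq0.
by rewrite -(cnot_orbit_delta d_a1) (cnot_orbit_delta d_a2).
Qed.

End CnotOrbit.

Theorem mainTheorem3 (n r k : nat) (H : 'M[F2]_(r, n + n))
  (QX QZ : 'M[F2]_(k, n + n)) :
  stab_code H -> k = (n - r)%N -> logical_basis H QX QZ ->
  phantom_wrt H QX QZ ->
  forall w : nat * nat * nat, forall c1 c2 : 'rV[F2]_k,
    c1 != 0 -> c2 != 0 ->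
    coset_count H QX c1 w = coset_count H QX c2 w /\
    coset_count H QZ c1 w = coset_count H QZ c2 w.
Proof.
move=> _ _ _ phantom w c1 c2 nz1 nz2; split.
  apply: (cnot_orbit_nonzero (f := fun c => coset_count H QX c w)) nz1 nz2.
  move=> a b c ab; have [s [/andP [sHs _] sQXs _]] := phantom a b ab.
  exact: coset_count_invol sHs sQXs _ _ (cnot_mxK ab).
apply: (cnot_orbit_nonzero (f := fun c => coset_count H QZ c w)) nz1 nz2.
move=> a b c ab; have ba : b != a by rewrite eq_sym.
have [s [/andP [sHs _] _]] := phantom b a ba.
rewrite invmx_cnot // trmx_cnot => sQZs.
exact: coset_count_invol sHs sQZs _ _ (cnot_mxK ab).
Qed.
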